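(* Assume $\kappa=\kappa^{<\kappa}$. Every point of $S_\kappa$ is a strong butterfly point: for every $x\in S_\kappa$ there are disjoint open sets $A,B\subseteq S_\kappa$ with $A\cup B=S_\kappa\setminus\{x\}$ and $\overline{A}\cap\overline{B}=\{x\}$.
   Context: A space is zero-dimensional if it has a base of clopen sets. For a zero-dimensional space $X$ and an open $U\subseteq X$, the ($X$-)type $\tau(U)$ is the least cardinal $\tau$ such that $U$ is a union of $\tau$ many clopen subsets of $X$. A zero-dimensional space is an $F_\kappa$-space if every open subset of type less than $\kappa$ is $C^*$-embedded (every bounded continuous real-valued function on it extends continuously to the whole space). A space is a $G_\kappa$-space if every non-empty intersection of fewer than $\kappa$ open sets has non-empty interior. A $\kappa$-Parovičenko space is a compact Hausdorff zero-dimensional $F_\kappa$- and $G_\kappa$-space without isolated points (no weight restriction is imposed). If $\kappa=\kappa^{<\kappa}$ there is, up to homeomorphism, a unique $\kappa$-Parovičenko space of weight $\kappa$; it is denoted $S_\kappa$ (under CH, $S_{\omega_1}\cong\omega^*=\beta\omega\setminus\omega$). A point $x$ of a Hausdorff space $X$ is a strong butterfly point if $X\setminus\{x\}$ can be partitioned into open sets $A,B$ (the wings) with $\overline{A}\cap\overline{B}=\{x\}$. *)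

From Stdlib Require Import Reals List.
Open Scope R_scope.

Definition card_le (A B : Type) : Prop :=
  exists f : A -> B, forall a1 a2, f a1 = f a2 -> a1 = a2.
Definition card_lt (A B : Type) : Prop := card_le A B /\ ~ card_le B A.

(* The cardinal kappa is represented by a type K of cardinality kappa.
   kappa is infinite, and kappa^{<kappa} = kappa, i.e. kappa^lambda <= kappa
   for every cardinal lambda < kappa. *)
Definition infinite_card (K : Type) : Prop := card_le nat K.
Definition kappa_lt_kappa_eq (K : Type) : Prop :=
  forall L : Type, card_lt L K -> card_le (L -> K) K.

Section Topology.
Context {X : Type} (T : (X -> Prop) -> Prop).

Definition is_topology : Prop :=
  T (fun _ => True) /\
  (forall U V, T U -> T V -> T (fun x => U x /\ V x)) /\
  (forall F : (X -> Prop) -> Prop, (forall U, F U -> T U) ->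
     T (fun x => exists U, F U /\ U x)).

Definition clopen (U : X -> Prop) : Prop := T U /\ T (fun x => ~ U x).

Definition is_base {I : Type} (b : I -> X -> Prop) : Prop :=
  (forall i, T (b i)) /\
  (forall U x, T U -> U x -> exists i, b i x /\ forall y, b i y -> U y).

Definition has_weight (K : Type) : Prop :=
  (exists b : K -> X -> Prop, is_base b) /\
  (forall (I : Type) (b : I -> X -> Prop), is_base b -> card_le K I).

Definition hausdorff : Prop :=
  forall x y, x <> y -> exists U V, T U /\ T V /\ U x /\ V y /\
     forall z, ~ (U z /\ V z).

Definition compact : Prop :=
  forall F : (X -> Prop) -> Prop, (forall U, F U -> T U) ->
    (forall x, exists U, F U /\ U x) ->
    exists l : list (X -> Prop), (forall U, In U l -> F U) /\
      (forall x, exists U, In U l /\ U x).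

Definition zero_dimensional : Prop :=
  forall U x, T U -> U x -> exists C, clopen C /\ C x /\ forall y, C y -> U y.

Definition no_isolated_points : Prop := forall x : X, ~ T (fun y => y = x).

Definition type_lt (K : Type) (U : X -> Prop) : Prop :=
  exists (I : Type) (c : I -> X -> Prop), card_lt I K /\ (forall i, clopen (c i)) /\
    forall x, U x <-> exists i, c i x.

(* continuity on a subspace U (relative topology), for f : X -> R;
   the values of f outside U are irrelevant *)
Definition continuous_on (U : X -> Prop) (f : X -> R) : Prop :=
  forall x, U x -> forall eps, eps > 0 ->
    exists V, T V /\ V x /\ forall y, U y -> V y -> Rabs (f y - f x) < eps.

Definition C_star_embedded (U : X -> Prop) : Prop :=
  forall f : X -> R, continuous_on U f ->
    (exists M, forall x, U x -> Rabs (f x) <= M) ->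
    exists g : X -> R, continuous_on (fun _ => True) g /\ forall x, U x -> g x = f x.

Definition F_kappa_space (K : Type) : Prop :=
  zero_dimensional /\ forall U, T U -> type_lt K U -> C_star_embedded U.

Definition G_kappa_space (K : Type) : Prop :=
  forall (I : Type) (O : I -> X -> Prop), card_lt I K -> (forall i, T (O i)) ->
    (exists x, forall i, O i x) ->
    exists V, T V /\ (exists x, V x) /\ forall x, V x -> forall i, O i x.

(* kappa-Parovicenko space (no weight restriction) *)
Definition kappa_Parovicenko (K : Type) : Prop :=
  compact /\ hausdorff /\ zero_dimensional /\ F_kappa_space K /\ G_kappa_space K /\
  no_isolated_points.

Definition closure (A : X -> Prop) (x : X) : Prop :=
  forall U, T U -> U x -> exists y, U y /\ A y.

Definition strong_butterfly_point (x : X) : Prop :=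
  exists A B : X -> Prop, T A /\ T B /\
    (forall y, ~ (A y /\ B y)) /\
    (forall y, (A y \/ B y) <-> y <> x) /\
    (forall y, (closure A y /\ closure B y) <-> y = x).

End Topology.

From Pilot Require Import Defs.
From mathcomp Require Import ssreflect ssrfun ssrbool eqtype boolp wochoice.
From Stdlib Require Import Reals List Lra Wellfounded.
From Stdlib Require Import Classical ClassicalEpsilon FunctionalExtensionality
  PropExtensionality ProofIrrelevance.
Open Scope R_scope.

(* Fix a base of clopen neighbourhoods N_a of x indexed by kappa, and enumerate
   kappa along a well-order all of whose initial segments have size < kappa.
   By transfinite recursion we build stages (M_a, P_a, Q_a): clopen sets with
   x in M_a <= N_a, P_a and Q_a partitioning X \ M_a, both wings meeting N_a,
   and every left wing P disjoint from every right wing Q.  At stage a the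
   fewer than kappa earlier wings are separated by a clopen set E (F_kappa
   property plus compactness), the earlier cores together with N_a contain a
   non-empty open set V (G_kappa property), and inside V we carve clopen sets
   R1 <= R avoiding x; then M_a = N_a \ R, P_a = (E \ N_a) u R1 and
   Q_a = (X \ (N_a u E)) u (R \ R1).  The wings of the butterfly are the
   unions A = U P_a and B = U Q_a: they cover X \ {x} because the cores shrink
   to x, and x is in both closures because both wings meet every N_a. *)

Lemma sig_val_inj {A : Type} (P : A -> Prop) (u v : {a | P a}) :
  proj1_sig u = proj1_sig v -> u = v.
Proof. by apply: eq_sig_hprop => a p q; apply: proof_irrelevance. Qed.

Lemma subset_card_le {A : Type} (P : A -> Prop) : card_le {a | P a} A.
Proof. by exists (@proj1_sig _ _) => u v; apply: sig_val_inj. Qed.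

Lemma strict_well_order (A : Type) : exists lt : A -> A -> Prop,
  well_founded lt /\ (forall a b, lt a b \/ a = b \/ lt b a).
Proof.
have [R woR] := @well_ordering_principle (classicType A).
have least : forall P : A -> Prop, (exists a, P a) ->
    exists z, P z /\ forall w, P w -> R z w.
  move=> P [a Pa].
  have [|z [[zP lbz] _]] := woR (fun a : classicType A => `[< P a >]).
    by exists a; rewrite unfold_in; apply/asboolP.
  exists z; split; first by move: zP; rewrite unfold_in => /asboolP.
  by move=> w Pw; apply: lbz; rewrite unfold_in; apply/asboolP.
have total : forall a b, R a b \/ R b a.
  move=> a b; have [z [[->|->] lbz]] := least (fun w => w = a \/ w = b)
    (ex_intro _ a (or_introl erefl)); [left|right]; apply: lbz; by [right|left].
have antisym : forall a b, R a b -> R b a -> a = b.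
  move=> a b Rab Rba.
  pose ab := fun k : classicType A => `[< k = a \/ k = b >].
  have inab k : k \in ab <-> k = a \/ k = b.
    by rewrite unfold_in; split => /asboolP.
  have [|z [_ uniq]] := woR ab; first by exists a; apply/inab; left.
  have Raa : R a a by case: (total a a).
  have Rbb : R b b by case: (total b b).
  have mina : minimum_of R ab a.
    by split; [apply/inab; left | move=> w /inab [->|->]].
  have minb : minimum_of R ab b.
    by split; [apply/inab; right | move=> w /inab [->|->]].
  by rewrite -(uniq a mina) (uniq b minb).
exists (fun a b => R a b /\ a <> b); split.
- move=> a; apply: NNPP => nAcc.
  have [z [nAccz lbz]] := least (fun k => ~ Acc _ k) (ex_intro _ a nAcc).
  apply: nAccz; constructor=> w [Rwz nwz]; apply: NNPP => nAccw.
  by apply: nwz; apply: antisym => //; apply: lbz.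
- move=> a b; case: (classic (a = b)) => [eab|nab]; first by right; left.
  by case: (total a b) => R'; [left|right; right]; split => // eba; apply: nab.
Qed.

(* It is obtained by
   pulling back the order to the shortest initial segment into which A injects. *)
Lemma initial_well_order (A : Type) : exists lt : A -> A -> Prop,
  well_founded lt /\ (forall a b, lt a b \/ a = b \/ lt b a) /\
  (forall a, card_lt {b | lt b a} A).
Proof.
have [lt0 [wf0 tri0]] := strict_well_order A.
case: (classic (exists a, card_le A {b | lt0 b a})) => [[a0 big0]|small]; last first.
  exists lt0; split=> //; split=> // a; split; first exact: subset_card_le.
  by move=> big; apply: small; exists a.
have [a [[f finj] minimal]] : exists a, card_le A {b | lt0 b a} /\
    forall c, lt0 c a -> ~ card_le A {b | lt0 b c}.
  apply: NNPP => none; move: a0 big0; apply: (well_founded_ind wf0) => a IH bigA.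
  by apply: none; exists a; split=> // c ca bigc; apply: IH ca bigc.
pose g k := proj1_sig (f k).
have ginj : forall k1 k2, g k1 = g k2 -> k1 = k2.
  by move=> k1 k2 e; apply: finj; apply: sig_val_inj.
exists (fun u v => lt0 (g u) (g v)); split; first exact: wf_inverse_image.
split.
  move=> u v; case: (tri0 (g u) (g v)) => [|[/ginj|]]; by [left|right; left|right; right].
move=> k; split; first exact: subset_card_le.
case=> h hinj; apply: (minimal (g k) (proj2_sig (f k))).
exists (fun y => exist (fun b => lt0 b (g k)) (g (proj1_sig (h y))) (proj2_sig (h y))).
move=> y1 y2 /(f_equal (@proj1_sig _ _)) /= /ginj e.
by apply: hinj; apply: sig_val_inj.
Qed.

Lemma transfinite_choice {A D : Type} (lt : A -> A -> Prop) (wf : well_founded lt)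
  (d0 : D) (G : forall a, (forall b, lt b a -> D) -> D -> Prop) :
  (forall a (f : A -> D), (forall b, lt b a -> G b (fun c _ => f c) (f b)) ->
     exists d, G a (fun c _ => f c) d) ->
  exists f : A -> D, forall a, G a (fun c _ => f c) (f a).
Proof.
move=> continue.
pose next a h := epsilon (inhabits d0) (G a h).
pose f := Fix wf (fun _ => D) next.
have unfold_f a : f a = next a (fun c _ => f c).
  apply: (Fix_eq wf (fun _ => D) next) => a' h1 h2 e.
  have -> // : h1 = h2.
  by do 2 apply: functional_extensionality_dep => ?; apply: e.
exists f => a; elim/(well_founded_ind wf): a => a IH.
by rewrite [f a]unfold_f; apply: epsilon_spec; apply: continue.
Qed.

Record stage (X : Type) : Type := Stage
  { core : X -> Prop; lwing : X -> Prop; rwing : X -> Prop }.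
Arguments Stage {X}.
Arguments core {X}.
Arguments lwing {X}.
Arguments rwing {X}.

Definition apart {X : Type} (d e : stage X) : Prop :=
  forall y, ~ (lwing d y /\ rwing e y).

Section Topology.
Variables (X : Type) (T : (X -> Prop) -> Prop).
Hypothesis htop : is_topology T.

Lemma open_ext (U V : X -> Prop) : (forall y, U y <-> V y) -> T U -> T V.
Proof.
move=> UV; have -> // : U = V.
by apply: functional_extensionality => y; apply: propositional_extensionality.
Qed.

Lemma open_local (S : X -> Prop) :
  (forall y, S y -> exists V, T V /\ V y /\ forall w, V w -> S w) -> T S.
Proof.
move=> loc; case: htop => _ [_ union].
apply: (open_ext (fun y => exists V, (T V /\ forall w, V w -> S w) /\ V y)).
  move=> y; split=> [[V [[_ VS] Vy]]|Sy]; first exact: VS.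
  by have [V [TV [Vy VS]]] := loc y Sy; exists V.
by apply: union => V [].
Qed.

Lemma open_and (U V : X -> Prop) : T U -> T V -> T (fun y => U y /\ V y).
Proof. by case: htop => _ [inter _]; apply: inter. Qed.

Lemma open_or (U V : X -> Prop) : T U -> T V -> T (fun y => U y \/ V y).
Proof.
move=> TU TV; apply: open_local => y [Uy|Vy]; [exists U|exists V];
  do 2 (split=> //); move=> w; by [left|right].
Qed.

Lemma open_empty : T (fun _ => False).
Proof. by apply: open_local => y []. Qed.

Lemma clopen_ext (U V : X -> Prop) :
  (forall y, U y <-> V y) -> clopen T U -> clopen T V.
Proof.
move=> UV [TU TnU]; split; first exact: (open_ext _ _ UV TU).
by apply: (open_ext _ _ _ TnU) => y; rewrite UV.
Qed.

Lemma clopen_compl (U : X -> Prop) : clopen T U -> clopen T (fun y => ~ U y).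
Proof.
case=> TU TnU; split=> //.
by apply: (open_ext _ _ _ TU) => y; split=> [Uy nUy|]; [apply: nUy | apply: NNPP].
Qed.

Lemma clopen_and (U V : X -> Prop) :
  clopen T U -> clopen T V -> clopen T (fun y => U y /\ V y).
Proof.
move=> [TU TnU] [TV TnV]; split; first exact: open_and.
by apply: (open_ext (fun y => ~ U y \/ ~ V y)); [move=> y; tauto | apply: open_or].
Qed.

Lemma clopen_or (U V : X -> Prop) :
  clopen T U -> clopen T V -> clopen T (fun y => U y \/ V y).
Proof.
move=> [TU TnU] [TV TnV]; split; first exact: open_or.
by apply: (open_ext (fun y => ~ U y /\ ~ V y)); [move=> y; tauto | apply: open_and].
Qed.

Lemma clopen_empty : clopen T (fun _ => False).
Proof.
split; first exact: open_empty.
by case: htop => Tfull _; apply: (open_ext _ _ _ Tfull) => y; tauto.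
Qed.

Lemma clopen_full : clopen T (fun _ => True).
Proof. by apply: (clopen_ext _ _ _ (clopen_compl _ clopen_empty)) => y; tauto. Qed.

Lemma clopen_list_union (G : (X -> Prop) -> Prop) (l : list (X -> Prop)) :
  (forall U, G U -> clopen T U) -> clopen T (fun z => exists U, In U l /\ G U /\ U z).
Proof.
move=> Gclopen; elim: l => [|U0 l IH].
  by apply: (clopen_ext _ _ _ clopen_empty) => y; split=> [[]|[U [[] _]]].
have head : clopen T (fun z => G U0 /\ U0 z).
  case: (classic (G U0)) => [GU0|nGU0].
    by apply: (clopen_ext _ _ _ (Gclopen _ GU0)) => y; tauto.
  by apply: (clopen_ext _ _ _ clopen_empty) => y; tauto.
apply: (clopen_ext _ _ _ (clopen_or _ _ head IH)) => y /=; split.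
  by case=> [[GU0 U0y]|[U [lU GUy]]]; [exists U0; auto | exists U; auto].
by case=> [U [[<-|lU] GUy]]; [left | right; exists U].
Qed.

Lemma open_below (g : X -> R) (c : R) :
  continuous_on T (fun _ => True) g -> T (fun z => g z < c).
Proof.
move=> gc; apply: open_local => z gz.
have [|V [TV [Vz HV]]] := gc z I (c - g z); first lra.
exists V; split=> //; split=> // w Vw.
by have /Rabs_def2 := HV w I Vw; lra.
Qed.

Lemma open_above (g : X -> R) (c : R) :
  continuous_on T (fun _ => True) g -> T (fun z => c < g z).
Proof.
move=> gc; apply: open_local => z gz.
have [|V [TV [Vz HV]]] := gc z I (g z - c); first lra.
exists V; split=> //; split=> // w Vw.
by have /Rabs_def2 := HV w I Vw; lra.
Qed.

Section Parovicenko.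
Variable K : Type.
Hypotheses (hc : Defs.compact T) (hH : hausdorff T) (hz : zero_dimensional T)
  (hF : F_kappa_space T K) (hG : G_kappa_space T K) (hni : no_isolated_points T).

Lemma clopen_between (G U : X -> Prop) : T G -> T U -> (forall z, G z \/ U z) ->
  exists E, clopen T E /\ (forall z, ~ G z -> E z) /\ (forall z, E z -> U z).
Proof.
move=> TG TU cover.
pose inside V := clopen T V /\ forall z, V z -> U z.
have [||l [lfam lcover]] := hc (fun V => V = G \/ inside V).
- by move=> V [->|[[TV _] _]].
- move=> z; case: (cover z) => [Gz|Uz]; first by exists G; split=> //; left.
  have [C [cC [Cz CU]]] := hz U z TU Uz.
  by exists C; split=> //; right.
exists (fun z => exists V, In V l /\ inside V /\ V z); split; [|split].
- by apply: clopen_list_union => V [].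
- move=> z nGz; have [V [lV Vz]] := lcover z.
  by case: (lfam V lV) => [eVG|insV]; [subst V | exists V].
- by move=> z [V [_ [[_ VU] Vz]]]; apply: VU.
Qed.

(* The
   indicator of the union of the P_i is continuous on the open set W = U P_i u
   U Q_j of type < kappa, so it extends continuously to the whole space. *)
Lemma clopen_separation (I : Type) (P Q : I -> X -> Prop) : card_lt I K ->
  (forall i, clopen T (P i)) -> (forall i, clopen T (Q i)) ->
  (forall i j y, ~ (P i y /\ Q j y)) ->
  exists E, clopen T E /\ (forall i y, P i y -> E y) /\ (forall i y, Q i y -> ~ E y).
Proof.
move=> smallI cP cQ PQ.
pose inP y := exists i, P i y.
pose inQ y := exists i, Q i y.
pose W y := exists i, P i y \/ Q i y.
have open_family (S : I -> X -> Prop) : (forall i, clopen T (S i)) ->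
    T (fun y => exists i, S i y).
  move=> cS; apply: open_local => y [i Sy].
  by exists (S i); split; [case: (cS i) | split=> // w Sw; exists i].
have TW : T W.
  apply: (open_ext _ _ _ (open_or _ _ (open_family P cP) (open_family Q cQ))).
  move=> y; rewrite /W; split=> [[[i Py]|[i Qy]]|[i [Py|Qy]]].
  - by exists i; left.
  - by exists i; right.
  - by left; exists i.
  - by right; exists i.
have typeW : type_lt T K W.
  by exists I, (fun i y => P i y \/ Q i y); split=> //; split=> // i; apply: clopen_or.
pose f y := if excluded_middle_informative (inP y) then 1 else 0.
have f1 y : inP y -> f y = 1.
  by rewrite /f; case: excluded_middle_informative.
have f0 y : inQ y -> f y = 0.
  rewrite /f => -[j Qy]; case: excluded_middle_informative => // -[i Py].
  by case: (PQ i j y).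
have fcont : continuous_on T W f.
  move=> y [i [Py|Qy]] eps eps0.
  - exists inP; split; first exact: open_family.
    split=> [|w _ Pw]; first by exists i.
    by rewrite (f1 w Pw) f1 ?Rminus_diag ?Rabs_R0 //; exists i.
  - exists inQ; split; first exact: open_family.
    split=> [|w _ Qw]; first by exists i.
    by rewrite (f0 w Qw) f0 ?Rminus_diag ?Rabs_R0 //; exists i.
have fbound : exists M, forall y, W y -> Rabs (f y) <= M.
  exists 1 => y _; rewrite /f.
  by case: (excluded_middle_informative (inP y)) => ?; rewrite ?Rabs_R1 ?Rabs_R0; lra.
have [g [gc gf]] := proj2 hF W TW typeW f fcont fbound.
have [|E [cE [Ege1 Egthalf]]] := clopen_between (fun z => g z < 1)
  (fun z => / 2 < g z) (open_below g 1 gc) (open_above g (/ 2) gc).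
  by move=> z; case: (Rlt_or_le (g z) 1) => ?; [left|right]; lra.
exists E; split=> //; split.
- move=> i y Py; apply: Ege1.
  have Wy : W y by exists i; left.
  by rewrite (gf y Wy) (f1 y); [lra | exists i].
- move=> i y Qy /Egthalf.
  have Wy : W y by exists i; right.
  by rewrite (gf y Wy) (f0 y); [lra | exists i].
Qed.

Lemma clopen_nbhd_avoiding (y w : X) (V : X -> Prop) : y <> w -> T V -> V y ->
  exists C, clopen T C /\ C y /\ (forall u, C u -> V u) /\ ~ C w.
Proof.
move=> ne TV Vy.
have [U [W [TU [TW [Uy [Ww UW]]]]]] := hH y w ne.
have [C [cC [Cy CUV]]] := hz (fun u => U u /\ V u) y (open_and _ _ TU TV) (conj Uy Vy).
exists C; split=> //; split=> //; split=> [u /CUV []//|Cw].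
by apply: (UW w); split=> //; case: (CUV w Cw).
Qed.

Lemma open_other_point (V : X -> Prop) (v : X) : T V -> V v ->
  exists y, V y /\ y <> v.
Proof.
move=> TV Vv; apply: NNPP => single; apply: (hni v).
apply: (open_ext _ _ _ TV) => y; split=> [Vy|->] //.
by apply: NNPP => ne; apply: single; exists y.
Qed.

(* Inside any non-empty open set V one finds a clopen set R missing a given
   point x, together with a clopen R1 such that both R1 and R \ R1 are
   non-empty: the seeds of the two wings at a new stage. *)
Lemma clopen_split_off (V : X -> Prop) (v x : X) : T V -> V v ->
  exists R R1 y z, clopen T R /\ clopen T R1 /\ (forall u, R u -> V u) /\
    ~ R x /\ (forall u, R1 u -> R u) /\ R1 y /\ R z /\ ~ R1 z.
Proof.
move=> TV Vv.
have [y [Vy yx]] : exists y, V y /\ y <> x.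
  by case: (classic (v = x)) => [<-|?]; [apply: open_other_point | exists v].
have [R [cR [Ry [RV nRx]]]] := clopen_nbhd_avoiding y x V yx TV Vy.
have [z [Rz zy]] := open_other_point R y (proj1 cR) Ry.
have [R1 [cR1 [R1y [R1R nR1z]]]] :=
  clopen_nbhd_avoiding y z R (not_eq_sym zy) (proj1 cR) Ry.
by exists R, R1, y, z.
Qed.

Lemma small_intersection_interior (I : Type) (O : I -> X -> Prop)
  (W : X -> Prop) (x : X) : card_lt I K -> (forall i, T (O i) /\ O i x) ->
  T W -> W x ->
  exists V, T V /\ (exists v, V v) /\ forall v, V v -> W v /\ forall i, O i v.
Proof.
move=> smallI Ox TW Wx; case: (classic (inhabited I)) => [[i0]|noI].
  have [||V [TV [neV VO]]] := hG I (fun i y => O i y /\ W y) smallI.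
  - by move=> i; apply: open_and; case: (Ox i).
  - by exists x => i; split=> //; case: (Ox i).
  exists V; split=> //; split=> // v Vv.
  by split=> [|i]; [case: (VO v Vv i0) | case: (VO v Vv i)].
exists W; split=> //; split; first by exists x.
by move=> v Wv; split=> // i; case: noI; constructor.
Qed.

Lemma clopen_local_base (I : Type) (b : I -> X -> Prop) (x : X) : is_base T b ->
  exists N : I -> X -> Prop, (forall i, clopen T (N i) /\ N i x) /\
    forall U, T U -> U x -> exists i, forall y, N i y -> U y.
Proof.
case=> bopen bbase.
have [N HN] : exists N : I -> X -> Prop, forall i,
    clopen T (N i) /\ N i x /\ (b i x -> forall y, N i y -> b i y).
  apply: (choice (fun i C => clopen T C /\ C x /\ (b i x -> forall y, C y -> b i y))).
  move=> i; case: (classic (b i x)) => [bx|nbx].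
    by have [C [cC [Cx Cb]]] := hz (b i) x (bopen i) bx; exists C.
  by exists (fun _ => True); split; [exact: clopen_full | split].
exists N; split=> [i|U TU Ux]; first by case: (HN i) => ? [].
have [i [bx bU]] := bbase U x TU Ux.
by exists i => y /(proj2 (proj2 (HN i)) bx); apply: bU.
Qed.

Record stage_ok (x : X) (d : stage X) : Prop := StageOk {
  core_clopen : clopen T (core d);
  lwing_clopen : clopen T (lwing d);
  rwing_clopen : clopen T (rwing d);
  core_point : core d x;
  wings_cover : forall y, lwing d y \/ rwing d y <-> ~ core d y;
  wings_apart : apart d d }.

Lemma wing_not_core (x y : X) (d : stage X) : stage_ok x d ->
  lwing d y \/ rwing d y -> ~ core d y.
Proof. by move=> ok /(wings_cover _ _ ok y). Qed.

Record continues (x : X) (W : X -> Prop) {I : Type} (s : I -> stage X)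
    (d : stage X) : Prop := Continues {
  continues_ok : stage_ok x d;
  core_inside : forall y, core d y -> W y;
  lwing_meets : exists y, lwing d y /\ W y;
  rwing_meets : exists y, rwing d y /\ W y;
  apart_history : forall i, apart d (s i) /\ apart (s i) d }.

Definition refined_stage (W E R R1 : X -> Prop) : stage X :=
  Stage (fun y => W y /\ ~ R y) (fun y => (~ W y /\ E y) \/ R1 y)
    (fun y => (~ W y /\ ~ E y) \/ (R y /\ ~ R1 y)).

Lemma refined_stage_ok (x : X) (W E R R1 : X -> Prop) :
  clopen T W -> clopen T E -> clopen T R -> clopen T R1 ->
  (forall u, R u -> W u) -> (forall u, R1 u -> R u) -> W x -> ~ R x ->
  stage_ok x (refined_stage W E R R1).
Proof.
move=> cW cE cR cR1 RW R1R Wx nRx; split=> /=.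
- by apply: clopen_and => //; apply: clopen_compl.
- by apply: clopen_or => //; apply: clopen_and => //; apply: clopen_compl.
- by apply: clopen_or; apply: clopen_and => //; apply: clopen_compl.
- by split.
- move=> y; have := RW y; have := R1R y.
  by case: (classic (W y)); case: (classic (E y)); case: (classic (R y));
    case: (classic (R1 y)); tauto.
- by move=> y /=; have := RW y; have := R1R y; tauto.
Qed.

(* The
   earlier wings are separated by a clopen E (F_kappa); the earlier cores and
   W contain a non-empty open V (G_kappa), in which R1 <= R are chosen. *)
Lemma stage_step (x : X) (W : X -> Prop) (I : Type) (s : I -> stage X) :
  card_lt I K -> (forall i, stage_ok x (s i)) -> (forall i j, apart (s i) (s j)) ->
  clopen T W -> W x -> exists d, continues x W s d.
Proof.
move=> smallI ok apart_s cW Wx.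
have [E [cE [lwingE rwingE]]] := clopen_separation I (fun i => lwing (s i))
  (fun i => rwing (s i)) smallI (fun i => lwing_clopen _ _ (ok i))
  (fun i => rwing_clopen _ _ (ok i)) apart_s.
have [V [TV [[v Vv] Vinside]]] := small_intersection_interior I
  (fun i => core (s i)) W x smallI
  (fun i => conj (proj1 (core_clopen _ _ (ok i))) (core_point _ _ (ok i))) (proj1 cW) Wx.
have [R [R1 [y [z [cR [cR1 [RV [nRx [R1R [R1y [Rz nR1z]]]]]]]]]]] :=
  clopen_split_off V v x TV Vv.
have RW u : R u -> W u by move=> /RV /Vinside [].
have Rcore u i : R u -> core (s i) u by move=> /RV /Vinside [_]; apply.
exists (refined_stage W E R R1); split.
- exact: refined_stage_ok.
- by move=> u [].
- by exists y; split; [right | apply/RW/R1R].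
- by exists z; split; [right; split | apply: RW].
- move=> i; split=> u /=.
  + case=> [[[_ Eu]|R1u] ru]; first exact: rwingE ru Eu.
    by apply: (wing_not_core _ _ _ (ok i) (or_intror ru)); apply/Rcore/R1R.
  + case=> [lu [[_ nEu]|[Ru _]]]; first exact: nEu (lwingE i u lu).
    by apply: (wing_not_core _ _ _ (ok i) (or_introl lu)); apply: Rcore.
Qed.

Lemma stages_apart (A : Type) (x : X) (N : A -> X -> Prop) (lt : A -> A -> Prop)
  (f : A -> stage X) (S : A -> Prop) : (forall a b, lt a b \/ a = b \/ lt b a) ->
  (forall a, S a -> continues x (N a) (fun i : {b | lt b a} => f (proj1_sig i)) (f a)) ->
  forall c d, S c -> S d -> apart (f c) (f d).
Proof.
move=> tri cont c d Sc Sd; case: (tri c d) => [cd|[<-|dc]].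
- by case: (apart_history _ _ _ _ (cont d Sd) (exist _ c cd)).
- exact: wings_apart _ _ (continues_ok _ _ _ _ (cont c Sc)).
- by case: (apart_history _ _ _ _ (cont c Sc) (exist _ d dc)).
Qed.

Lemma butterfly_from_stages (A : Type) (x : X) (N : A -> X -> Prop)
  (f : A -> stage X) :
  (forall U, T U -> U x -> exists a, forall y, N a y -> U y) ->
  (forall a, stage_ok x (f a)) -> (forall c d, apart (f c) (f d)) ->
  (forall a y, core (f a) y -> N a y) ->
  (forall a, exists y, lwing (f a) y /\ N a y) ->
  (forall a, exists y, rwing (f a) y /\ N a y) ->
  strong_butterfly_point T x.
Proof.
move=> Nbase ok apart_f inside lmeets rmeets.
pose Left y := exists a, lwing (f a) y.
pose Right y := exists a, rwing (f a) y.
have TLeft : T Left.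
  apply: open_local => y [a la]; exists (lwing (f a)).
  by split; [case: (lwing_clopen _ _ (ok a)) | split=> // w lw; exists a].
have TRight : T Right.
  apply: open_local => y [a ra]; exists (rwing (f a)).
  by split; [case: (rwing_clopen _ _ (ok a)) | split=> // w rw; exists a].
have disjoint y : ~ (Left y /\ Right y).
  by case=> -[c lc] [d rd]; apply: (apart_f c d y).
have cover y : Left y \/ Right y <-> y <> x.
  split=> [wing_y yx|yx].
    subst y; case: wing_y => [[a wa]|[a wa]].
    - by apply: (wing_not_core _ _ _ (ok a) (or_introl wa)); apply: core_point.
    - by apply: (wing_not_core _ _ _ (ok a) (or_intror wa)); apply: core_point.
  have [C [cC [Cx [_ nCy]]]] :=
    clopen_nbhd_avoiding x y (fun _ => True) (not_eq_sym yx) (proj1 htop) I.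
  have [a NaC] := Nbase C (proj1 cC) Cx.
  have ncore : ~ core (f a) y by move=> /inside /NaC.
  by case/(wings_cover _ _ (ok a)): ncore => [la|ra]; [left|right]; exists a.
exists Left, Right; do 3 (split=> //); split=> // y.
split=> [[cLeft cRight]|->].
  apply: NNPP => /(proj2 (cover y)) [Ly|Ry].
  - by have [w [Rw Lw]] := cRight Left TLeft Ly; apply: (disjoint w).
  - by have [w [Lw Rw]] := cLeft Right TRight Ry; apply: (disjoint w).
split=> U TU Ux; have [a NaU] := Nbase U TU Ux.
- by have [w [lw Naw]] := lmeets a; exists w; split; [apply: NaU | exists a].
- by have [w [rw Naw]] := rmeets a; exists w; split; [apply: NaU | exists a].
Qed.

End Parovicenko.
End Topology.

Theorem lemma4p1 (K : Type) (hinf : infinite_card K) (hK : kappa_lt_kappa_eq K)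
  (X : Type) (T : (X -> Prop) -> Prop) (htop : is_topology T)
  (hP : kappa_Parovicenko T K) (hw : has_weight T K) :
  forall x : X, strong_butterfly_point T x.
Proof.
move=> x; case: hP => [hc [hH [hz [hF [hG hni]]]]].
have [[b bbase] _] := hw.
have [N [Nclopen Nbase]] := clopen_local_base X T htop hz K b x bbase.
have [lt [wf [tri small]]] := initial_well_order K.
pose history_ok a (h : forall c, lt c a -> stage X) d :=
  continues X T x (N a) (fun i : {c | lt c a} => h (proj1_sig i) (proj2_sig i)) d.
have [|f f_ok] := transfinite_choice lt wf (Stage (fun _ => True) (fun _ => True)
    (fun _ => True)) history_ok.
  move=> a f IH; case: (Nclopen a) => cNa Nax.
  apply: (stage_step X T htop K hc hH hz hF hG hni x (N a) _ _ (small a)) => //.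
  - by move=> i; apply: (continues_ok _ _ _ _ _ _ (IH _ (proj2_sig i))).
  - move=> i j; apply: (stages_apart X T _ x N lt f (fun c => lt c a)) => //.
    + exact: proj2_sig i.
    + exact: proj2_sig j.
have apart_f := stages_apart X T _ x N lt f (fun _ => True) tri (fun a _ => f_ok a).
apply: (butterfly_from_stages X T htop hH hz _ x N f Nbase).
- by move=> a; apply: (continues_ok _ _ _ _ _ _ (f_ok a)).
- by move=> c d; apply: apart_f.
- by move=> a; apply: (core_inside _ _ _ _ _ _ (f_ok a)).
- by move=> a; apply: (lwing_meets _ _ _ _ _ _ (f_ok a)).
- by move=> a; apply: (rwing_meets _ _ _ _ _ _ (f_ok a)).
Qed.
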